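(* For all real $x\ge4$, $H(x)<\dfrac{2\log(x)}{1+\frac{6}{\pi^2x}}$.
   Context: $H(x)=\int_0^1\frac{t^x-1}{t-1}\,dt$ for real $x\ge1$; it satisfies $H(n)=1+\frac12+\cdots+\frac1n$ for $n\in\mathbb{N}$ and $H(x)=\psi(x+1)+\gamma$ with $\psi=\Gamma'/\Gamma$ the digamma function. *)

From Stdlib Require Import Reals.
From Coquelicot Require Import Coquelicot.
Open Scope R_scope.

(* Values at the endpoints t = 0, t = 1 are irrelevant for the Riemann
   integral (removable singularity at t = 1, bounded integrand). *)
Definition H_integrand (x t : R) : R := (Rpower t x - 1) / (t - 1).

Definition H (x : R) : R := RInt (H_integrand x) 0 1.

(** Split the integral at [a = 1 - 1/x].  On [[0, a]] the numerator [1 - t^x]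
    is at most [1], so the integrand is at most [1/(1 - t)], whose integral is
    [ln x].  On [[a, 1]] Bernoulli's inequality [1 - t^x <= x (1 - t)] bounds
    the integrand by [x], on an interval of length [1/x].  Hence
    [H x <= ln x + 1], and [(ln x + 1) (1 + 6/(pi^2 x)) < 2 ln x] for [x >= 4]
    because [6/(4 pi^2) < 0.16] and [ln 4 > 1.37]. *)

From Stdlib Require Import Reals Lra ZArith.
From Coquelicot Require Import Coquelicot.
Open Scope R_scope.

Lemma ln_le_sub1 y : 0 < y -> ln y <= y - 1.
Proof.
intros Hy; pose proof (exp_ineq1_le (ln y)) as E.
rewrite exp_ln in E; lra.
Qed.

Lemma Rpower_base_1 y : Rpower 1 y = 1.
Proof. unfold Rpower; rewrite ln_1, Rmult_0_r; apply exp_0. Qed.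

(** Weighted AM-GM with weights [p] and [1 - p], from concavity of [ln]. *)
Lemma Rpower_weighted_AM_GM u p :
  0 < u -> 0 < p <= 1 -> Rpower u p <= p * u + (1 - p).
Proof.
intros Hu Hp.
set (m := p * u + (1 - p)).
assert (Hm : 0 < m) by (unfold m; nra).
pose proof (ln_le_sub1 (u / m) ltac:(apply Rdiv_lt_0_compat; lra)) as H1.
pose proof (ln_le_sub1 (/ m) ltac:(apply Rinv_0_lt_compat; lra)) as H2.
rewrite ln_div in H1 by lra; rewrite ln_Rinv in H2 by lra.
assert (Hmean : p * (u / m - 1) + (1 - p) * (/ m - 1) = 0)
  by (field_simplify_eq; [unfold m; ring | lra]).
assert (Hexp : p * ln u <= ln m).
{ pose proof (Rmult_le_compat_l p _ _ ltac:(lra) H1).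
  pose proof (Rmult_le_compat_l (1 - p) _ _ ltac:(lra) H2).
  lra. }
rewrite <- (exp_ln m) by exact Hm; unfold Rpower.
destruct (Rle_lt_or_eq_dec _ _ Hexp) as [Hlt | ->].
- left; apply exp_increasing, Hlt.
- right; reflexivity.
Qed.

Lemma Rpower_Bernoulli t x : 0 < t -> 1 <= x -> 1 + x * (t - 1) <= Rpower t x.
Proof.
intros Ht Hx.
assert (Hu : 0 < Rpower t x) by apply exp_pos.
assert (Hp : 0 < / x <= 1).
{ split; [apply Rinv_0_lt_compat; lra|].
  rewrite <- Rinv_1; apply Rinv_le_contravar; lra. }
pose proof (Rpower_weighted_AM_GM (Rpower t x) (/ x) Hu Hp) as Hmean.
rewrite Rpower_mult, Rinv_r, Rpower_1 in Hmean by lra.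
apply (Rmult_le_compat_l x) in Hmean; [|lra].
replace (x * (/ x * Rpower t x + (1 - / x))) with (Rpower t x + x - 1) in Hmean
  by (field; lra).
lra.
Qed.

Lemma Rpower_le_base t x : 0 < t < 1 -> 1 <= x -> Rpower t x <= t.
Proof.
intros Ht Hx.
assert (Hlnt : ln t < 0) by (rewrite <- ln_1; apply ln_increasing; lra).
unfold Rpower; rewrite <- (exp_ln t) at 2 by lra.
destruct (Rle_lt_or_eq_dec _ _ Hx) as [Hlt | <-].
- left; apply exp_increasing; nra.
- rewrite Rmult_1_l; lra.
Qed.

Lemma continuous_of_eps_delta (f : R -> R) z :
  (forall eps, 0 < eps -> exists d, 0 < d /\
     forall y, Rabs (y - z) < d -> Rabs (f y - f z) < eps) ->
  continuous f z.
Proof.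
intros H; apply filterlim_locally; intros eps.
destruct (H eps (cond_pos eps)) as [d [Hd Hy]].
exists (mkposreal d Hd); intros y Hb; apply Hy, Hb.
Qed.

Section Integrand.

Variable x : R.
Hypothesis Hx : 1 <= x.

Lemma H_integrand_flip t : t <> 1 ->
  H_integrand x t = (1 - Rpower t x) / (1 - t).
Proof. intros Ht; unfold H_integrand; field; lra. Qed.

Lemma H_integrand_le_inv t : 0 < t < 1 -> H_integrand x t <= / (1 - t).
Proof.
intros Ht; rewrite H_integrand_flip by lra.
assert (Hpos : 0 < Rpower t x) by apply exp_pos.
rewrite <- (Rmult_1_l (/ (1 - t))); unfold Rdiv.
apply Rmult_le_compat_r; [left; apply Rinv_0_lt_compat|]; lra.
Qed.

Lemma H_integrand_le_exponent t : 0 < t < 1 -> H_integrand x t <= x.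
Proof.
intros Ht; rewrite H_integrand_flip by lra.
pose proof (Rpower_Bernoulli t x ltac:(lra) Hx).
apply (Rmult_le_reg_r (1 - t)); [lra|].
unfold Rdiv; rewrite Rmult_assoc, Rinv_l by lra; lra.
Qed.

Lemma H_integrand_sub1_bounds t : 0 < t < 1 ->
  0 <= H_integrand x t - 1 <= t / (1 - t).
Proof.
intros Ht.
assert (Hpos : 0 < Rpower t x) by apply exp_pos.
pose proof (Rpower_le_base t x Ht Hx).
replace (H_integrand x t - 1) with ((t - Rpower t x) / (1 - t))
  by (unfold H_integrand; field; lra).
split; [apply Rdiv_le_0_compat; lra|].
unfold Rdiv; apply Rmult_le_compat_r; [left; apply Rinv_0_lt_compat|]; lra.
Qed.

(** The integrand extended continuously to [[0, 1]]: the limits at [0] and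
    [1] are [1] and the derivative [x] of [t^x] at [1]. *)
Definition H_integrand_ext t :=
  if Rle_dec t 0 then 1 else if Rle_dec 1 t then x else H_integrand x t.

Lemma H_integrand_ext_eq t : 0 < t < 1 -> H_integrand_ext t = H_integrand x t.
Proof.
intros Ht; unfold H_integrand_ext.
destruct (Rle_dec t 0); [lra|]; destruct (Rle_dec 1 t); [lra|]; reflexivity.
Qed.

Lemma H_integrand_ext_continuous_interior z : 0 < z < 1 ->
  continuous H_integrand_ext z.
Proof.
intros Hz.
apply (continuous_ext_loc _ (fun t => (exp (x * ln t) - 1) / (t - 1))).
- assert (Hd : 0 < Rmin z (1 - z)) by (apply Rmin_glb_lt; lra).
  exists (mkposreal _ Hd); intros y Hy.
  change (Rabs (y - z) < Rmin z (1 - z)) in Hy; apply Rabs_def2 in Hy.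
  pose proof (Rmin_l z (1 - z)); pose proof (Rmin_r z (1 - z)).
  rewrite H_integrand_ext_eq by lra; reflexivity.
- apply (ex_derive_continuous (fun t => (exp (x * ln t) - 1) / (t - 1))).
  auto_derive; lra.
Qed.

Lemma H_integrand_ext_continuous_0 : continuous H_integrand_ext 0.
Proof.
apply continuous_of_eps_delta; intros eps Heps.
exists (Rmin (eps / 2) (1 / 2)); split; [apply Rmin_glb_lt; lra|].
intros y Hy; rewrite Rminus_0_r in Hy; apply Rabs_def2 in Hy.
pose proof (Rmin_l (eps / 2) (1 / 2)); pose proof (Rmin_r (eps / 2) (1 / 2)).
unfold H_integrand_ext at 2; destruct (Rle_dec 0 0); [|lra].
destruct (Rle_dec y 0) as [Hy0 | Hy0].
- unfold H_integrand_ext; destruct (Rle_dec y 0); [|lra].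
  rewrite Rminus_diag, Rabs_R0; lra.
- rewrite H_integrand_ext_eq by lra.
  destruct (H_integrand_sub1_bounds y ltac:(lra)) as [Hlo Hhi].
  rewrite Rabs_pos_eq by lra.
  apply Rle_lt_trans with (y / (1 - y)); [exact Hhi|].
  apply (Rmult_lt_reg_r (1 - y)); [lra|].
  unfold Rdiv; rewrite Rmult_assoc, Rinv_l by lra; nra.
Qed.

Lemma H_integrand_ext_continuous_1 : continuous H_integrand_ext 1.
Proof.
apply continuous_of_eps_delta; intros eps Heps.
destruct (derivable_pt_lim_power 1 x ltac:(lra) eps Heps) as [del Hdel].
exists (Rmin del (1 / 2)); split; [apply Rmin_glb_lt; [apply cond_pos | lra]|].
intros y Hy; apply Rabs_def2 in Hy.
pose proof (Rmin_l del (1 / 2)); pose proof (Rmin_r del (1 / 2)).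
unfold H_integrand_ext at 2; destruct (Rle_dec 1 0); [lra|].
destruct (Rle_dec 1 1); [|lra].
destruct (Rle_dec 1 y) as [Hy1 | Hy1].
- unfold H_integrand_ext; destruct (Rle_dec y 0); [lra|].
  destruct (Rle_dec 1 y); [|lra].
  rewrite Rminus_diag, Rabs_R0; lra.
- rewrite H_integrand_ext_eq by lra.
  specialize (Hdel (y - 1) ltac:(lra) ltac:(apply Rabs_def1; lra)).
  replace (1 + (y - 1)) with y in Hdel by ring.
  rewrite !Rpower_base_1, Rmult_1_r in Hdel.
  exact Hdel.
Qed.

Lemma ex_RInt_H_integrand : ex_RInt (H_integrand x) 0 1.
Proof.
apply (ex_RInt_ext H_integrand_ext).
- intros t Ht; rewrite Rmin_left, Rmax_right in Ht by lra.
  apply H_integrand_ext_eq, Ht.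
- apply (ex_RInt_continuous (V := R_CompleteNormedModule)); intros z Hz.
  rewrite Rmin_left, Rmax_right in Hz by lra.
  destruct (Rle_lt_or_eq_dec _ _ (proj1 Hz)) as [Hz0 | <-];
    [destruct (Rle_lt_or_eq_dec _ _ (proj2 Hz)) as [Hz1 | ->]|].
  + apply H_integrand_ext_continuous_interior; lra.
  + apply H_integrand_ext_continuous_1.
  + apply H_integrand_ext_continuous_0.
Qed.

End Integrand.

Lemma is_RInt_inv_one_sub a : a < 1 ->
  is_RInt (fun t => / (1 - t)) 0 a (- ln (1 - a)).
Proof.
intros Ha.
replace (- ln (1 - a)) with
  (minus ((fun t => - ln (1 - t)) a) ((fun t => - ln (1 - t)) 0))
  by (unfold minus, plus, opp; simpl; rewrite Rminus_0_r, ln_1; ring).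
apply (is_RInt_derive (fun t => - ln (1 - t))); intros t Ht;
  assert (t < 1) by (pose proof (Rmax_lub_lt 0 a 1 ltac:(lra) Ha); lra).
- auto_derive; [lra | field; lra].
- apply (ex_derive_continuous (fun t => / (1 - t))); auto_derive; lra.
Qed.

Lemma H_le_ln_add1 x : 1 <= x -> H x <= ln x + 1.
Proof.
intros Hx; set (a := 1 - / x).
assert (Hinv : 0 < / x <= 1).
{ split; [apply Rinv_0_lt_compat; lra|].
  rewrite <- Rinv_1; apply Rinv_le_contravar; lra. }
assert (Ha : 0 <= a < 1) by (unfold a; lra).
pose proof (ex_RInt_H_integrand x Hx) as Hex.
pose proof (ex_RInt_Chasles_1 _ 0 a 1 ltac:(lra) Hex) as Hex1.
pose proof (ex_RInt_Chasles_2 _ 0 a 1 ltac:(lra) Hex) as Hex2.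
unfold H; rewrite <- (RInt_Chasles _ 0 a 1 Hex1 Hex2).
assert (Hleft : RInt (H_integrand x) 0 a <= ln x).
{ pose proof (is_RInt_inv_one_sub a ltac:(lra)) as HI.
  replace (ln x) with (- ln (1 - a))
    by (unfold a; replace (1 - (1 - / x)) with (/ x) by ring;
        rewrite ln_Rinv by lra; ring).
  rewrite <- (is_RInt_unique _ _ _ _ HI).
  apply RInt_le; [lra | exact Hex1 | eexists; exact HI |].
  intros t Ht; apply H_integrand_le_inv; lra. }
assert (Hright : RInt (H_integrand x) a 1 <= 1).
{ apply Rle_trans with (RInt (fun _ => x) a 1).
  - apply RInt_le; [lra | exact Hex2 | apply ex_RInt_const |].
    intros t Ht; apply H_integrand_le_exponent; lra.
  - rewrite RInt_const; unfold scal; simpl; unfold mult; simpl.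
    unfold a; right; field; lra. }
unfold plus; simpl; lra.
Qed.

Lemma PI_gt_313 : 313 / 100 < PI.
Proof.
destruct (PI_2_3_7_ineq 0) as [H _].
simpl in H; unfold tg_alt, PI_2_3_7_tg, Ratan_seq in H; simpl in H; lra.
Qed.

Lemma exp_le_inv_one_sub z : z < 1 -> exp z <= / (1 - z).
Proof.
intros Hz; pose proof (exp_ineq1_le (- z)).
rewrite <- (Rinv_inv (exp z)); apply Rinv_le_contravar; [lra|].
rewrite <- exp_Ropp; lra.
Qed.

Lemma exp_mult_INR n z : exp (INR n * z) = exp z ^ n.
Proof.
induction n as [|n IH]; [simpl; rewrite Rmult_0_l; apply exp_0|].
rewrite S_INR, Rmult_plus_distr_r, Rmult_1_l, exp_plus, IH; simpl; ring.
Qed.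

(** [exp (1.37) = exp (1.37/128)^128 <= (12800/12663)^128 < 4]. *)
Lemma ln4_gt_137 : 137 / 100 < ln 4.
Proof.
rewrite <- (ln_exp (137 / 100)); apply ln_increasing; [apply exp_pos|].
replace (137 / 100) with (INR 128 * (137 / 12800)) by (simpl; field).
rewrite exp_mult_INR.
apply Rle_lt_trans with ((/ (1 - 137 / 12800)) ^ 128).
{ apply pow_incr; split; [left; apply exp_pos | apply exp_le_inv_one_sub; lra]. }
replace (/ (1 - 137 / 12800)) with (IZR 12800 / IZR 12663) by (field; lra).
unfold Rdiv; rewrite Rpow_mult_distr, pow_inv, !pow_IZR.
apply (Rmult_lt_reg_r (IZR (12663 ^ Z.of_nat 128))); [apply IZR_lt; reflexivity|].
rewrite Rmult_assoc, Rinv_l by (apply not_0_IZR; vm_compute; discriminate).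
rewrite Rmult_1_r, <- mult_IZR; apply IZR_lt; vm_compute; reflexivity.
Qed.

Theorem mainTheorem13 (x : R) (hx : 4 <= x) :
  H x < 2 * ln x / (1 + 6 / (PI ^ 2 * x)).
Proof.
pose proof (H_le_ln_add1 x ltac:(lra)) as HH.
pose proof PI_gt_313; pose proof ln4_gt_137.
assert (Hln : ln 4 <= ln x) by (apply ln_le; lra).
set (c := 6 / (PI ^ 2 * x)).
assert (Hpi : 9.7969 * 4 <= PI ^ 2 * x) by (simpl; nra).
assert (Hc0 : 0 < c) by (apply Rdiv_lt_0_compat; lra).
assert (Hc : c <= 6 / (9.7969 * 4))
  by (apply Rmult_le_compat_l; [lra | apply Rinv_le_contravar; lra]).
apply Rle_lt_trans with (ln x + 1); [exact HH|].
apply (Rmult_lt_reg_r (1 + c)); [lra|].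
unfold Rdiv; rewrite Rmult_assoc, Rinv_l, Rmult_1_r by lra.
nra.
Qed.
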